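(* Let $t\ge 1$ be an integer and $n \geq 2t+110$. Then $D_t > n^{n-2t-17}$, where \[ D_t:= \min_{\substack{F \text{ forest}\\|F|=t}} \ \min_{\substack{T_0 \in \mathcal{T}_n \setminus \mathcal{S}_n \\ |T_0 \cap F| < t}} \ |\mathcal{T}_n[T_0;F]|. \]
   Context: $\mathcal{T}_n$ is the set of labelled spanning trees of $K_n$ (vertex set $[n]$), each identified with its edge set in $\binom{[n]}{2}$; forests are likewise identified with their edge sets and $|F|$ is the number of edges. $\mathcal{S}_n\subset\mathcal{T}_n$ is the set of stars (spanning trees with a vertex of degree $n-1$). For a forest $F$ and $T_0\in\mathcal{T}_n$, $\mathcal{T}_n[T_0;F]:=\{T\in\mathcal{T}_n : F\subseteq T,\ (T\cap T_0)\setminus F=\emptyset\}$, the trees containing $F$ that share no edge with $T_0$ outside $F$. The minimum in $D_t$ ranges over all forests $F$ of $K_n$ with $t$ edges and all non-star spanning trees $T_0$ with $|T_0\cap F|<t$. *)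

From mathcomp Require Import all_boot.
Set Implicit Arguments. Unset Strict Implicit. Unset Printing Implicit Defensive.

(* Graphs on vertex set [n] = 'I_n, identified with their edge sets:
   an edge is a 2-element subset of 'I_n. *)
Definition edgeset (n : nat) := {set {set 'I_n}}.

Definition simple_edges n (E : edgeset n) : bool :=
  [forall e in E, #|e| == 2].

Definition adj n (E : edgeset n) : rel 'I_n :=
  fun x y => (x != y) && ([set x; y] \in E).

Definition connected_graph n (E : edgeset n) : bool :=
  [forall x : 'I_n, forall y : 'I_n, connect (adj E) x y].

(* acyclic: no edge lies on a cycle, i.e. removing any edge {x,y}
   disconnects x from y *)
Definition acyclic n (E : edgeset n) : bool :=
  [forall x : 'I_n, forall y : 'I_n, (x != y) && ([set x; y] \in E) ==>
    ~~ connect (adj (E :\ [set x; y])) x y].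

Definition is_forest n (F : edgeset n) : bool :=
  simple_edges F && acyclic F.

Definition is_spanning_tree n (T : edgeset n) : bool :=
  [&& simple_edges T, acyclic T & connected_graph T].

Definition degree n (E : edgeset n) (v : 'I_n) : nat :=
  #|[set e in E | v \in e]|.

Definition is_star n (T : edgeset n) : bool :=
  is_spanning_tree T && [exists v : 'I_n, degree T v == n.-1].

Definition trees_avoiding n (T0 F : edgeset n) : {set edgeset n} :=
  [set T : edgeset n | is_spanning_tree T && (F \subset T)
                       && ((T :&: T0) \subset F)].

From mathcomp Require Import all_boot zify.
Set Implicit Arguments. Unset Strict Implicit. Unset Printing Implicit Defensive.

(* Root every component of F, so that F is the edge set of a parent function
   p0 with k = n - t roots. Grafting a root r onto a vertex v of another
   component with {r, v} outside T0 keeps F and adds no edge of T0. With k'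
   roots left there are at least (k' - 3) n + 1 such grafts: of the k' n pairs
   (root, vertex) at most n lie in a common component and at most 2 |T0| < 2 n
   span an edge of T0. Conversely, a forest obtained by j grafts comes from at
   most j forests, since undoing a graft only means resetting one of the j
   roots of p0 that are no longer roots. Double counting yields at least
   n^(k-3) (k-3)! / (k-2)! >= n^(k-4) forests with two components. Since T0 is
   not a star, its edges cannot cover all pairs across a cut, so each such
   forest becomes a tree of T_n[T0; F] by one more edge outside T0; the tree,
   that edge and the two roots determine the forest, whence at least n^(k-8)
   trees. *)

Lemma eq_set2 (T : finType) (a b c d : T) :
  [set a; b] = [set c; d] -> (a = c /\ b = d) \/ (a = d /\ b = c).
Proof.
move=> E.
have /set2P ac : a \in [set c; d] by rewrite -E set21.
have /set2P bd : b \in [set c; d] by rewrite -E set22.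
have /set2P ca : c \in [set a; b] by rewrite E set21.
have /set2P db : d \in [set a; b] by rewrite E set22.
case: ac bd => -> [] -> in ca db *.
- by case: db => ->; left.
- by left.
- by right.
- by case: ca => ->; left.
Qed.

Lemma setU1I_subset (T : finType) (A B C : {set T}) x :
  x \notin B -> A :&: B \subset C -> (x |: A) :&: B \subset C.
Proof.
move=> xB sABC; apply/subsetP => y; rewrite !inE => /andP[/orP[/eqP->|yA] yB].
  by rewrite yB in xB.
by apply: (subsetP sABC); rewrite inE yA.
Qed.

Lemma double_counting (X Y : finType) (A : {set X}) (B : {set Y})
    (R : X -> Y -> bool) (a b : nat) :
  (forall x, x \in A -> a <= #|[set y in B | R x y]|) ->
  (forall y, y \in B -> #|[set x in A | R x y]| <= b) ->
  #|A| * a <= #|B| * b.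
Proof.
move=> lbA ubB.
have cardE (Z : finType) (C : {set Z}) (P : pred Z) :
    #|[set z in C | P z]| = \sum_(z in C) P z.
  rewrite -sum1_card big_mkcond [RHS]big_mkcond; apply: eq_bigr => z _.
  by rewrite inE; case: (z \in C); case: (P z).
rewrite -!sum_nat_const; apply: (@leq_trans (\sum_(x in A) \sum_(y in B) R x y)).
  by apply: leq_sum => x /lbA; rewrite cardE.
by rewrite exchange_big; apply: leq_sum => y /ubB; rewrite cardE.
Qed.

Lemma prod_affine_ge m n : n ^ m.-1 * m.-1`! <= \prod_(i < m) ((m.-1 - i) * n + 1).
Proof.
have incr k : n ^ k.-1 * k.-1`! <= \prod_(i < k) (i * n + 1).
  elim: k => [|k IH]; first by rewrite big_ord0.
  rewrite big_ord_recr /=; case: k IH => [|k] IH; first by rewrite big_ord0.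
  apply: leq_trans (leq_mul IH (leq_addr 1 (k.+1 * n))) => /=; rewrite expnS factS.
  by move: (n ^ k) (k`!) => A B; apply: eq_leq; lia.
apply: leq_trans (incr m) _; rewrite (reindex_inj rev_ord_inj) /=.
by apply/eq_leq/eq_bigr => i _; congr (_ * _ + _); lia.
Qed.

Section Graphs.
Variable n : nat.
Implicit Types (E : edgeset n) (x y : 'I_n).

Lemma adj_sym E : symmetric (adj E).
Proof. by move=> x y; rewrite /adj eq_sym setUC. Qed.

Lemma connect_adj_sym E : connect_sym (adj E).
Proof. exact/sym_connect_sym/adj_sym. Qed.

Lemma connect_adj_subset E E' x y :
  E \subset E' -> connect (adj E) x y -> connect (adj E') x y.
Proof.
move=> sEE'; apply: connect_sub => u v /andP[uv uvE].
by apply: connect1; rewrite /adj uv (subsetP sEE').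
Qed.

Lemma not_connect_cut E (Q : {set 'I_n}) x y :
  (forall u v, adj E u v -> u \in Q -> v \in Q) -> x \in Q -> y \notin Q ->
  ~~ connect (adj E) x y.
Proof.
move=> closedQ xQ yQ; apply/negP => /(closed_connect (intro_closed (connect_adj_sym E) closedQ)).
by rewrite xQ (negbTE yQ).
Qed.

Lemma acyclic_setU2 E a b :
  acyclic E -> ~~ connect (adj E) a b -> acyclic ([set a; b] |: E).
Proof.
move=> acycE nab.
have ab : a != b by apply: (contraNneq _ nab) => ->; exact: connect0.
have abE : [set a; b] \notin E.
  by apply: (contraNN _ nab) => abE; apply: connect1; rewrite /adj ab.
apply/forallP => x; apply/forallP => y; apply/implyP => /andP[xy].
rewrite !inE => /orP[/eqP xyab|xyE].
  rewrite xyab setU1K //; case/eq_set2: xyab => -[-> ->] //.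
  by rewrite connect_adj_sym.
set G := E :\ [set x; y].
have nxy : ~~ connect (adj G) x y by have := forallP (forallP acycE x) y; rewrite xy xyE.
have toE u v : connect (adj G) u v -> connect (adj E) u v.
  exact/connect_adj_subset/subD1set.
have x_y : connect (adj E) x y by apply: connect1; rewrite /adj xy.
(* The vertices reachable from x in G together with the edge {a, b}. *)
pose Q := [set u | [|| connect (adj G) x u,
                      connect (adj G) x a && connect (adj G) b u |
                      connect (adj G) x b && connect (adj G) a u]].
apply: (not_connect_cut (Q := Q)); last first.
- have y_x : connect (adj E) y x by rewrite connect_adj_sym.
  rewrite inE (negbTE nxy) /=; apply/norP; split; apply/negP => /andP[/toE xu /toE vy].
  + by apply/negP: nab; rewrite connect_adj_sym (connect_trans vy (connect_trans y_x xu)).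
  + by apply/negP: nab; rewrite (connect_trans vy (connect_trans y_x xu)).
- by rewrite inE connect0.
have Qab : (a \in Q) = (b \in Q).
  rewrite !inE !connect0 !andbT.
  by case: (connect (adj G) x a); case: (connect (adj G) x b); rewrite /= ?orbT.
move=> u v /andP[uv]; rewrite in_setD1 in_setU1 => /andP[uvxy /orP[/eqP uvab|uvE]].
  by case/eq_set2: uvab => -[-> ->]; rewrite Qab.
have Guv : connect (adj G) u v by apply: connect1; rewrite /adj uv !inE uvxy.
rewrite !inE; case/or3P => [xu|/andP[xa bu]|/andP[xb au]].
- by rewrite (connect_trans xu Guv).
- by rewrite xa (connect_trans bu Guv) orbT.
- by rewrite xb (connect_trans au Guv) !orbT.
Qed.

Lemma card_pairs_in_edges E :
  #|[set c : 'I_n * 'I_n | [set c.1; c.2] \in E]| <= 2 * #|E|.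
Proof.
pose f (c : 'I_n * 'I_n) := ([set c.1; c.2], c.1 < c.2).
have inj : {in [set c : 'I_n * 'I_n | [set c.1; c.2] \in E] &, injective f}.
  move=> [a b] [c d] _ _ [/eq_set2[[-> ->]//|[-> ->]]] /=.
  by case: (ltngtP c d) => // /val_inj ->.
rewrite -(card_in_imset inj) mulnC -card_bool -cardsT -cardsX; apply: subset_leq_card.
by apply/subsetP => x /imsetP[c]; rewrite !inE => cE ->; rewrite cE.
Qed.

End Graphs.

Section ParentFunctions.
Variable n : nat.
Implicit Types (p q : {ffun 'I_n -> 'I_n}) (u v w r : 'I_n).

(* A rooted forest is encoded by its parent function, roots being fixed points;
   [rooted p] says that p has no cycle other than these loops. *)
Definition root_of p v := iter n p v.
Definition rooted p := [forall v, p (root_of p v) == root_of p v].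
Definition roots_of p := [set v | p v == v].
Definition parent_edges p : edgeset n := [set [set v; p v] | v in ~: roots_of p].
(* The number of steps from v to its root. *)
Definition depth p v := \sum_(k < n) (p (iter k p v) != iter k p v).

Lemma parent_root_of p v : rooted p -> p (root_of p v) = root_of p v.
Proof. by move/forallP/(_ v)/eqP. Qed.

Lemma root_of_id p v : p v = v -> root_of p v = v.
Proof. exact: iter_fix. Qed.

Lemma root_of_parent p v : rooted p -> root_of p (p v) = root_of p v.
Proof. by move=> rp; rewrite /root_of -iterSr iterS parent_root_of. Qed.

Lemma root_of_in_roots p v : rooted p -> root_of p v \in roots_of p.
Proof. by move=> rp; rewrite inE parent_root_of. Qed.

Lemma depth_parent p v : rooted p -> p v != v -> depth p v = (depth p (p v)).+1.
Proof.
move=> /forallP/(_ v)/eqP root_v pv.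
pose a k := nat_of_bool (p (iter k p v) != iter k p v).
have := @big_ord_recl _ 0 addn n a; rewrite big_ord_recr /= /a root_v eqxx addn0 (negbTE pv).
rewrite /depth => ->; congr (_ + _); apply: eq_bigr => k _; by rewrite /a iterSr.
Qed.

Lemma depth_parent_lt p v : rooted p -> p v != v -> depth p (p v) < depth p v.
Proof. by move=> rp pv; rewrite (depth_parent rp pv). Qed.

Lemma depth_iter p k v : rooted p -> depth p (iter k p v) <= depth p v.
Proof.
move=> rp; elim: k => // k IH; rewrite iterS.
have [-> //|moves] := eqVneq (p (iter k p v)) (iter k p v).
exact: leq_trans (ltnW (depth_parent_lt rp moves)) IH.
Qed.

Lemma parent_ind p (P : 'I_n -> Prop) : rooted p ->
  (forall v, (p v != v -> P (p v)) -> P v) -> forall v, P v.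
Proof.
move=> rp IH v; have [d] := ubnP (depth p v); elim: d v => // d IHd v lt_v.
apply: IH => pv; apply: IHd; exact: leq_trans (depth_parent_lt rp pv) _.
Qed.

Lemma rooted_of_rank p (h : 'I_n -> nat) :
  (forall v, p v != v -> h (p v) < h v) -> rooted p.
Proof.
move=> hp; apply/forallP => v; apply/negPn/negP => moving_root.
have moving k : k <= n -> p (iter k p v) != iter k p v.
  move=> le_kn; apply: contra moving_root => /eqP fixed.
  have -> : root_of p v = iter k p v.
    by rewrite /root_of -(iter_fix (n - k) fixed) -iterD subnK.
  by rewrite fixed.
have decr i j : i < j <= n -> h (iter j p v) < h (iter i p v).
  elim: j => // j IH /andP[]; rewrite ltnS leq_eqVlt iterS => /orP[/eqP-> | lt_ij] le_jn.
    exact: hp (moving j (ltnW le_jn)).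
  by apply: ltn_trans (hp _ (moving j (ltnW le_jn))) (IH _); rewrite lt_ij ltnW.
have inj : injective (fun i : 'I_n.+1 => iter i p v).
  move=> i j /= eq_ij; apply/val_inj; case: (ltngtP i j) => // lt.
  - by have := decr i j; rewrite lt (leq_ord j) eq_ij ltnn => /(_ isT).
  - by have := decr j i; rewrite lt (leq_ord i) eq_ij ltnn => /(_ isT).
by have := leq_card _ inj; rewrite !card_ord ltnn.
Qed.

Lemma parent_parent_neq p v : rooted p -> p v != v -> p (p v) != v.
Proof.
move=> rp pv; apply/eqP => ppv.
have ppv' : p (p v) != p v by rewrite ppv eq_sym.
have := ltn_trans (depth_parent_lt rp ppv') (depth_parent_lt rp pv).
by rewrite ppv ltnn.
Qed.

Definition graft p r v : {ffun 'I_n -> 'I_n} := [ffun w => if w == r then v else p w].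

Lemma rooted_graft p r v : rooted p -> p r = r -> root_of p v != r -> rooted (graft p r v).
Proof.
move=> rp pr vr.
(* The tree of r now hangs below v, so its depths shift by depth v + 1. *)
apply: (@rooted_of_rank _ (fun w => depth p w + (root_of p w == r) * (depth p v).+1)) => w.
rewrite !ffunE; case: (eqVneq w r) => [-> _|wr pw].
  by rewrite (negbTE vr) mul0n addn0 (root_of_id pr) eqxx mul1n addnS ltnS leq_addl.
by rewrite root_of_parent // ltn_add2r depth_parent_lt.
Qed.

Lemma roots_of_graft p r v : v != r -> roots_of (graft p r v) = roots_of p :\ r.
Proof.
move=> vr; apply/setP => w; rewrite !inE ffunE.
by case: (eqVneq w r) => [->|]; rewrite ?(negbTE vr).
Qed.

Lemma parent_edgesP p e :
  reflect (exists2 v, p v != v & e = [set v; p v]) (e \in parent_edges p).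
Proof. by apply: (iffP imsetP) => -[v]; rewrite ?inE => pv ->; exists v; rewrite ?inE. Qed.

Lemma parent_edge p v : p v != v -> [set v; p v] \in parent_edges p.
Proof. by move=> pv; apply/parent_edgesP; exists v. Qed.

Lemma parent_edges_graft p r v : p r = r -> v != r ->
  parent_edges (graft p r v) = [set r; v] |: parent_edges p.
Proof.
move=> pr vr; apply/setP => e; rewrite !inE; apply/parent_edgesP/orP.
  case=> w; rewrite !ffunE; case: (eqVneq w r) => [-> _ ->|wr pw ->]; first by left.
  by right; apply: parent_edge.
case=> [/eqP->|/parent_edgesP[w pw ->]]; first by exists r; rewrite ffunE eqxx.
have wr : w != r by apply: contraNneq pw => ->; rewrite pr.
by exists w; rewrite ffunE (negbTE wr).
Qed.

Lemma simple_parent_edges p : simple_edges (parent_edges p).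
Proof.
apply/forallP => e; apply/implyP => /parent_edgesP[v pv ->].
by rewrite cards2 [v == _]eq_sym pv.
Qed.

Lemma card_parent_edges p : rooted p -> #|parent_edges p| + #|roots_of p| = n.
Proof.
move=> rp; rewrite card_in_imset => [|v w]; first by rewrite addnC cardsC card_ord.
rewrite !inE => pv pw /eq_set2[[]//|[vpw wpv]].
by have := parent_parent_neq rp pw; rewrite -vpw wpv eqxx.
Qed.

Lemma connect_root_of p (E : edgeset n) v : rooted p -> parent_edges p \subset E ->
  connect (adj E) v (root_of p v).
Proof.
move=> rp sub; move: v; apply: (parent_ind rp) => v IH.
have [pv|pv] := eqVneq (p v) v; first by rewrite root_of_id.
rewrite -root_of_parent //; apply: connect_trans (IH pv).
by apply: connect1; rewrite /adj eq_sym pv (subsetP sub) ?parent_edge.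
Qed.

Lemma root_of_parent_edge p u v : rooted p ->
  [set u; v] \in parent_edges p -> root_of p u = root_of p v.
Proof.
by move=> rp /parent_edgesP[w _ /eq_set2[[-> ->]|[-> ->]]]; rewrite root_of_parent.
Qed.

Lemma root_of_connect p u v : rooted p ->
  connect (adj (parent_edges p)) u v -> root_of p u = root_of p v.
Proof.
move=> rp; apply: contraTeq => /eqP ne.
apply: (not_connect_cut (Q := [set w | root_of p w == root_of p u]));
  rewrite ?inE ?eqxx //; last by rewrite eq_sym; apply/eqP.
by move=> w w' /andP[_ /(root_of_parent_edge rp)]; rewrite !inE => ->.
Qed.

Lemma acyclic_parent_edges p : rooted p -> acyclic (parent_edges p).
Proof.
move=> rp; apply/forallP => x; apply/forallP => y; apply/implyP => /andP[_].
case/parent_edgesP => w pw xy; rewrite xy.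
suff cut : ~~ connect (adj (parent_edges p :\ [set w; p w])) w (p w).
  by case/eq_set2: xy => -[-> ->] //; rewrite connect_adj_sym.
apply: (not_connect_cut (Q := [set u | fconnect p u w])); rewrite ?inE ?connect0 //.
  move=> u v /andP[_]; rewrite !inE => /andP[ne /parent_edgesP[z pz e]]; rewrite e in ne.
  case/eq_set2: e => -[-> ->] zw; last exact: connect_trans (fconnect1 p z) zw.
  have z_w : z != w by apply: contraNneq ne => ->.
  move: (iter_findex zw); case: (findex p z w) => [/= zw'|k]; first by rewrite zw' eqxx in z_w.
  by rewrite iterSr => <-; apply: fconnect_iter.
apply/negP => /iter_findex pw_w.
have := leq_ltn_trans (depth_iter (findex p (p w) w) (p w) rp) (depth_parent_lt rp pw).
by rewrite pw_w ltnn.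
Qed.

Lemma parent_edges_inj p q : rooted p -> rooted q ->
  roots_of p = roots_of q -> parent_edges p = parent_edges q -> p = q.
Proof.
move=> rp rq roots_pq edges_pq; apply/ffunP; apply: (parent_ind rq) => v IH.
have [qv|qv] := eqVneq (q v) v.
  have : v \in roots_of p by rewrite roots_pq inE qv.
  by rewrite inE qv => /eqP.
have : [set v; q v] \in parent_edges p by rewrite edges_pq parent_edge.
case/parent_edgesP => w pw /eq_set2[[<- <-]//|[vpw qvw]].
by have := parent_parent_neq rq qv; rewrite -IH // qvw -vpw eqxx.
Qed.

Lemma roots_of_two p u v : rooted p -> #|roots_of p| = 2 ->
  root_of p u != root_of p v -> roots_of p = [set root_of p u; root_of p v].
Proof.
move=> rp card_p uv; apply/esym/eqP; rewrite eqEcard cards2 uv card_p andbT.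
by apply/subsetP => x /set2P[]->; apply: root_of_in_roots.
Qed.

End ParentFunctions.

Lemma spanning_tree_link n (p : {ffun 'I_n -> 'I_n}) a b :
  rooted p -> #|roots_of p| = 2 -> root_of p a != root_of p b ->
  is_spanning_tree ([set a; b] |: parent_edges p).
Proof.
move=> rp card_p ab; set T := _ |: _.
have sub : parent_edges p \subset T := subsetUr _ _.
have a_b : a != b by apply: contraNneq ab => ->.
have ba : connect (adj T) b a.
  by apply: connect1; rewrite /adj (setUC [set b]) setU11 eq_sym a_b.
have to_root_a w : connect (adj T) w (root_of p w) -> connect (adj T) w (root_of p a).
  move/connect_trans; apply; have := root_of_in_roots w rp.
  rewrite (roots_of_two rp card_p ab) => /set2P[->|->]; first exact: connect0.
  apply: connect_trans (connect_trans _ ba) (connect_root_of a rp sub).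
  by rewrite connect_adj_sym connect_root_of.
apply/and3P; split.
- apply/forallP => e; rewrite !inE; apply/implyP => /orP[/eqP->|pe].
    by rewrite cards2 a_b.
  by have := forallP (simple_parent_edges p) e; rewrite pe.
- apply: acyclic_setU2 (acyclic_parent_edges rp) _.
  by apply: contra ab => /(root_of_connect rp)/eqP.
- apply/forallP => x; apply/forallP => y.
  apply: connect_trans (to_root_a x (connect_root_of x rp sub)) _.
  by rewrite connect_adj_sym; apply/to_root_a/connect_root_of.
Qed.

Lemma link_parent_edges_inj n (p q : {ffun 'I_n -> 'I_n}) a b :
  rooted p -> rooted q -> #|roots_of p| = 2 -> #|roots_of q| = 2 ->
  root_of p a != root_of p b -> root_of p a = root_of q a -> root_of p b = root_of q b ->
  [set a; b] |: parent_edges p = [set a; b] |: parent_edges q -> p = q.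
Proof.
move=> rp rq card_p card_q ab pqa pqb edges_pq.
have ab' : root_of q a != root_of q b by rewrite -pqa -pqb.
have fresh s : rooted s -> root_of s a != root_of s b -> [set a; b] \notin parent_edges s.
  by move=> rs; apply: contra => /(root_of_parent_edge rs)/eqP.
apply: (parent_edges_inj rp rq).
  by rewrite (roots_of_two rp card_p ab) (roots_of_two rq card_q ab') pqa pqb.
by rewrite -(setU1K (fresh p rp ab)) -(setU1K (fresh q rq ab')) edges_pq.
Qed.

Section ForestRooting.
Variables (n : nat) (F : edgeset n).
Hypothesis forestF : is_forest F.

Lemma root_adj u v : adj F u v -> root (adj F) u = root (adj F) v.
Proof. by move=> uv; apply/(rootP (connect_adj_sym F))/connect1. Qed.

Fixpoint reaches_root k v :=
  if k is k'.+1 then reaches_root k' v || [exists u, adj F v u && reaches_root k' u]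
  else v == root (adj F) v.

Lemma reaches_rootP v : exists k, reaches_root k v.
Proof.
have /connectP[s path_s last_s] := connect_root (adj F) v.
exists (size s); elim: s v path_s last_s => [|u s IH] v /=; first by move=> _ ->.
case/andP=> vu path_s last_s; apply/orP; right; apply/existsP; exists u.
by rewrite vu IH // -(root_adj vu).
Qed.

Definition dist_root v := ex_minn (reaches_rootP v).

Lemma dist_root0 v : dist_root v = 0 -> v = root (adj F) v.
Proof.
by rewrite /dist_root; case: ex_minnP => m reach_m _ m0; move: reach_m; rewrite m0 => /eqP.
Qed.

Lemma dist_root_adj v : 0 < dist_root v ->
  exists2 u, adj F v u & dist_root u < dist_root v.
Proof.
rewrite /dist_root; case: (ex_minnP (reaches_rootP v)) => -[//|k] /=.
case/orP => [reach_v|/existsP[u /andP[vu reach_u]]] min_k _.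
  by have := min_k _ reach_v; rewrite ltnn.
exists u => //; case: (ex_minnP (reaches_rootP u)) => m _ min_m.
by rewrite ltnS min_m.
Qed.

Definition bfs_parent : {ffun 'I_n -> 'I_n} :=
  [ffun v => odflt v [pick u | adj F v u && (dist_root u < dist_root v)]].

Lemma bfs_parentP v :
  if bfs_parent v == v then v = root (adj F) v
  else adj F v (bfs_parent v) && (dist_root (bfs_parent v) < dist_root v).
Proof.
rewrite ffunE; case: pickP => [u /= /andP[vu lt_uv]|none] /=; last first.
  rewrite eqxx; apply: dist_root0; apply/eqP; rewrite -leqn0 leqNgt.
  by apply/negP => /dist_root_adj[u vu lt_uv]; have := none u; rewrite vu lt_uv.
have uv : u != v by move: vu => /andP[]; rewrite eq_sym.
by rewrite (negbTE uv) vu lt_uv.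
Qed.

Lemma rooted_bfs_parent : rooted bfs_parent.
Proof.
apply: (@rooted_of_rank _ _ dist_root) => v pv.
by have := bfs_parentP v; rewrite (negbTE pv) => /andP[].
Qed.

Lemma parent_edges_bfs_parent_sub : parent_edges bfs_parent \subset F.
Proof.
apply/subsetP => e /parent_edgesP[v pv ->].
by have := bfs_parentP v; rewrite (negbTE pv) => /andP[/andP[]].
Qed.

Lemma root_of_bfs_parent v : root_of bfs_parent v = root (adj F) v.
Proof.
set r := root_of bfs_parent v.
have := bfs_parentP r; rewrite parent_root_of ?eqxx; last exact: rooted_bfs_parent.
move=> {1}->; apply/(rootP (connect_adj_sym F)); rewrite connect_adj_sym.
exact: connect_root_of rooted_bfs_parent parent_edges_bfs_parent_sub.
Qed.

Lemma parent_edges_bfs_parent : parent_edges bfs_parent = F.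
Proof.
have [simpleF acyclicF] := andP forestF.
apply/eqP; rewrite eqEsubset parent_edges_bfs_parent_sub; apply/subsetP => e eF.
have := forallP simpleF e; rewrite eF => /cards2P[x [y [xy exy]]]; rewrite exy in eF *.
apply/negPn/negP => not_parent.
have := forallP (forallP acyclicF x) y; rewrite xy eF => /negP; apply.
have sub : parent_edges bfs_parent \subset F :\ [set x; y].
  apply/subsetP => e' e'_in; rewrite !inE (subsetP parent_edges_bfs_parent_sub) // andbT.
  by apply: contraNneq not_parent => <-.
have same_root : root_of bfs_parent x = root_of bfs_parent y.
  by rewrite !root_of_bfs_parent; apply: root_adj; rewrite /adj xy eF.
apply: connect_trans (connect_root_of x rooted_bfs_parent sub) _.
by rewrite same_root connect_adj_sym connect_root_of ?rooted_bfs_parent.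
Qed.

End ForestRooting.

Lemma forest_parent_edges n (F : edgeset n) :
  is_forest F -> exists2 p, rooted p & parent_edges p = F.
Proof.
move=> forestF; exists (bfs_parent F); first exact: rooted_bfs_parent.
exact: parent_edges_bfs_parent.
Qed.

Lemma forest_spanning_tree n (T : edgeset n) : is_spanning_tree T -> is_forest T.
Proof. by case/and3P=> simpleT acyclicT _; apply/andP. Qed.

Lemma card_forest n (F : edgeset n) : is_forest F -> 0 < n -> #|F| < n.
Proof.
case/forest_parent_edges => p rp <- n_gt0.
have : 0 < #|roots_of p|.
  by apply/card_gt0P; exists (root_of p (Ordinal n_gt0)); exact: root_of_in_roots.
by have := card_parent_edges rp; lia.
Qed.

Lemma star_of_center n (T : edgeset n) x :
  is_spanning_tree T -> (forall y, y != x -> [set x; y] \in T) -> is_star T.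
Proof.
move=> treeT xT; rewrite /is_star treeT; apply/existsP; exists x; apply/eqP; rewrite /degree.
have [simpleT _ _] := and3P treeT.
have -> : [set e in T | x \in e] = [set [set x; y] | y in [set~ x]].
  apply/setP => e; rewrite !inE; apply/andP/imsetP => [[eT]|[y]].
    have := forallP simpleT e; rewrite eT => /cards2P[u [v [uv ->]]] /set2P[->|->].
      by exists v => //; rewrite !inE eq_sym.
    by exists u; rewrite ?inE // setUC.
  by rewrite !inE => yx ->; rewrite xT // set21.
rewrite card_in_imset ?cardsC1 ?card_ord // => y z; rewrite !inE => yx zx.
by case/eq_set2 => [[_ ->]|[/eqP]] //; rewrite eq_sym (negbTE zx).
Qed.

Lemma star_of_complete_cut n (T : edgeset n) (C : {set 'I_n}) a b :
  is_spanning_tree T -> a \in C -> b \notin C ->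
  (forall u v, u \in C -> v \notin C -> [set u; v] \in T) -> is_star T.
Proof.
move=> treeT aC bC cutT.
have card_T : #|T| < n.
  exact: card_forest (forest_spanning_tree treeT) (leq_ltn_trans (leq0n a) (ltn_ord a)).
have card_cut : #|C| * #|~: C| <= #|T|.
  rewrite -cardsX -(@card_in_imset _ _ (fun c : 'I_n * 'I_n => [set c.1; c.2])).
    apply/subset_leq_card/subsetP => e /imsetP[[u v]]; rewrite !inE /= => /andP[uC vC] ->.
    exact: cutT.
  move=> [u v] [u' v']; rewrite !inE /= => /andP[uC vC] /andP[u'C v'C].
  by case/eq_set2 => [[-> ->]//|[uv' _]]; move: uC; rewrite uv' (negbTE v'C).
have card_C : 0 < #|C| by apply/card_gt0P; exists a.
have card_notC : 0 < #|~: C| by apply/card_gt0P; exists b; rewrite inE.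
have [/eqP/cards1P[x Cx]|/eqP/cards1P[x notCx]] : #|C| = 1 \/ #|~: C| = 1.
  by have := cardsC C; rewrite card_ord; nia.
- apply: (star_of_center (x := x)) => // y yx.
  by apply: cutT; rewrite Cx !inE // eq_sym.
- apply: (star_of_center (x := x)) => // y yx; rewrite setUC.
  apply: cutT; last by rewrite -in_setC notCx inE.
  by rewrite -[y \in C]negbK -in_setC notCx inE.
Qed.

Section Grafting.
Variables (n : nat) (F T0 : edgeset n) (p0 : {ffun 'I_n -> 'I_n}).
Implicit Types (p : {ffun 'I_n -> 'I_n}) (c : 'I_n * 'I_n).

Definition graft_pairs p :=
  [set c | [&& p c.1 == c.1, root_of p c.2 != c.1 & [set c.1; c.2] \notin T0]].

Definition grafts p := [set graft p c.1 c.2 | c in graft_pairs p].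

(* Invariants of the forests obtained from p0 by j grafts. *)
Definition stage j := [set p | [&& rooted p, #|roots_of p| == #|roots_of p0| - j,
  roots_of p \subset roots_of p0, F \subset parent_edges p & parent_edges p :&: T0 \subset F]].

Lemma graft_pairsP p c : c \in graft_pairs p ->
  [/\ p c.1 = c.1, root_of p c.2 != c.1, c.2 != c.1 & [set c.1; c.2] \notin T0].
Proof.
rewrite inE => /and3P[/eqP pr rv ->]; split=> //.
by apply: contraNneq rv => ->; rewrite root_of_id.
Qed.

Lemma card_graft_pairs p : rooted p ->
  #|roots_of p| * n <= #|graft_pairs p| + n + 2 * #|T0|.
Proof.
move=> rp; pose same := [set (root_of p v, v) | v in [set: 'I_n]].
pose bad := [set c : 'I_n * 'I_n | [set c.1; c.2] \in T0].
have cover : setX (roots_of p) [set: 'I_n] \subset graft_pairs p :|: same :|: bad.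
  apply/subsetP => -[r v] /setXP[/= rr _]; rewrite !in_setU; move: rr; rewrite inE => pr.
  have [rv|rv] := eqVneq (root_of p v) r.
    by apply/orP; left; apply/orP; right; apply/imsetP; exists v; rewrite ?inE ?rv.
  have [bad_rv|good_rv] := boolP ([set r; v] \in T0).
    by apply/orP; right; rewrite inE.
  by apply/orP; left; apply/orP; left; rewrite inE /= pr rv.
have := subset_leq_card cover; rewrite cardsX cardsT card_ord => /leq_trans; apply.
have card_same : #|same| <= n by rewrite (leq_trans (leq_imset_card _ _)) ?cardsT ?card_ord.
have card_bad : #|bad| <= 2 * #|T0| := card_pairs_in_edges T0.
apply: leq_trans (leq_card_setU _ _).1 (leq_add _ card_bad).
exact: leq_trans (leq_card_setU _ _).1 (leq_add (leqnn _) card_same).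
Qed.

Lemma card_grafts p : #|grafts p| = #|graft_pairs p|.
Proof.
apply: card_in_imset => -[r v] [r' v'] rv_in _ /= eq_g.
have [/= pr _ vr _] := graft_pairsP rv_in.
have := congr1 (fun f : {ffun 'I_n -> 'I_n} => f r) eq_g; rewrite !ffunE eqxx.
have [<- -> //|rr'] := eqVneq r r'.
by rewrite pr => vr_eq; rewrite vr_eq eqxx in vr.
Qed.

Lemma graft_stage p c j :
  p \in stage j -> c \in graft_pairs p -> graft p c.1 c.2 \in stage j.+1.
Proof.
rewrite inE => /and5P[rp /eqP card_p sub_p0 F_sub T0_sub] /graft_pairsP[pr rv vr notT0].
rewrite inE rooted_graft // roots_of_graft // parent_edges_graft //=.
have r_root : c.1 \in roots_of p by rewrite inE pr.
apply/and4P; split.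
- by apply/eqP; move: (cardsD1 c.1 (roots_of p)); rewrite r_root card_p /=; lia.
- exact: subset_trans (subD1set _ _) sub_p0.
- exact: subset_trans F_sub (subsetUr _ _).
- exact: setU1I_subset.
Qed.

Lemma card_graft_sources p' j :
  p' \in stage j.+1 -> #|[set p in stage j | p' \in grafts p]| <= j.+1.
Proof.
rewrite inE => /and5P[_ /eqP card_p' sub_p' _ _].
apply: (@leq_trans #|[set graft p' r r | r in roots_of p0 :\: roots_of p']|).
  apply/subset_leq_card/subsetP => p; rewrite inE => /andP[p_stage /imsetP[[r v] rv ->]].
  have [/= pr _ vr _] := graft_pairsP rv.
  move: p_stage; rewrite inE => /and5P[_ _ sub_p _ _].
  apply/imsetP; exists r.
    by rewrite in_setD (subsetP sub_p) ?inE ?ffunE ?eqxx ?pr ?andbT.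
  by apply/ffunP => w; rewrite !ffunE; case: eqP => // ->.
rewrite (leq_trans (leq_imset_card _ _)) // cardsD (setIidPr sub_p') card_p'; lia.
Qed.

Lemma card_stage j : rooted p0 -> parent_edges p0 = F -> #|T0| < n ->
  j <= #|roots_of p0| - 2 ->
  \prod_(i < j) ((#|roots_of p0| - 3 - i) * n + 1) <= #|stage j| * j`!.
Proof.
move=> rooted_p0 edges_p0 card_T0; elim: j => [_|j IH lt_j].
  rewrite big_ord0 muln1 card_gt0; apply/set0Pn; exists p0.
  by rewrite inE rooted_p0 subn0 eqxx edges_p0 !subxx subsetIl.
rewrite big_ord_recr /=; apply: leq_trans (leq_mul (IH (ltnW lt_j)) (leqnn _)) _.
rewrite mulnAC factS mulnA leq_mul //; apply: double_counting => [p p_stage|p']; last first.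
  exact: card_graft_sources.
have -> : [set p' in stage j.+1 | p' \in grafts p] = grafts p.
  by apply/setP => p'; rewrite inE andb_idl // => /imsetP[c c_in ->]; exact: graft_stage.
move: p_stage; rewrite card_grafts inE => /and5P[rp /eqP card_p _ _ _].
have -> : #|roots_of p0| - 3 - j = #|roots_of p| - 3 by rewrite card_p; lia.
have : 3 * n <= #|roots_of p| * n by apply: leq_mul => //; rewrite card_p; lia.
by have := card_graft_pairs rp; rewrite mulnBl; lia.
Qed.

Definition linkable p c :=
  (root_of p c.1 != root_of p c.2) && ([set c.1; c.2] \notin T0).

Lemma exists_linkable p : is_spanning_tree T0 -> ~~ is_star T0 ->
  rooted p -> #|roots_of p| = 2 -> exists c, linkable p c.
Proof.
move=> treeT0 nstarT0 rp /eqP/cards2P[r1 [r2 [r12 roots_p]]].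
have root_r (r : 'I_n) : r \in roots_of p -> root_of p r = r.
  by rewrite inE => /eqP/root_of_id.
have r1_root : root_of p r1 = r1 by rewrite root_r // roots_p set21.
have r2_root : root_of p r2 = r2 by rewrite root_r // roots_p set22.
apply/existsP; apply: contraR nstarT0 => /existsPn no_link.
apply: (star_of_complete_cut (C := [set u | root_of p u == r1]) (a := r1) (b := r2)) => //.
- by rewrite inE r1_root.
- by rewrite inE r2_root eq_sym r12.
- move=> u v; rewrite !inE => /eqP ur1 vr1.
  by have := no_link (u, v); rewrite /linkable /= ur1 [r1 == _]eq_sym vr1 /= negbK.
Qed.

Lemma final_stage_roots p : 2 <= #|roots_of p0| ->
  p \in stage (#|roots_of p0| - 2) -> rooted p /\ #|roots_of p| = 2.
Proof. by move=> k0_ge2; rewrite inE => /and5P[rp /eqP card_p _ _ _]; split=> //; lia. Qed.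

Lemma link_trees_avoiding p c : 2 <= #|roots_of p0| ->
  p \in stage (#|roots_of p0| - 2) -> linkable p c ->
  [set c.1; c.2] |: parent_edges p \in trees_avoiding T0 F.
Proof.
move=> k0_ge2 p_final /andP[rc cT0]; have [rp card_p] := final_stage_roots k0_ge2 p_final.
move: p_final; rewrite !inE (spanning_tree_link rp card_p rc) => /and5P[_ _ _ F_sub T0_sub].
by rewrite (subset_trans F_sub (subsetUr _ _)) setU1I_subset.
Qed.

Lemma card_final_stage_le : is_spanning_tree T0 -> ~~ is_star T0 -> 2 <= #|roots_of p0| ->
  #|stage (#|roots_of p0| - 2)| <= #|trees_avoiding T0 F| * n ^ 4.
Proof.
move=> treeT0 nstarT0 k0_ge2.
pose link p (y : edgeset n * (('I_n * 'I_n) * ('I_n * 'I_n))) :=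
  [&& linkable p y.2.1, y.1 == [set y.2.1.1; y.2.1.2] |: parent_edges p &
      y.2.2 == (root_of p y.2.1.1, root_of p y.2.1.2)].
set B := setX (trees_avoiding T0 F) [set: ('I_n * 'I_n) * ('I_n * 'I_n)].
have -> : #|trees_avoiding T0 F| * n ^ 4 = #|B| * 1.
  by rewrite cardsX cardsT !card_prod card_ord muln1 !expnS expn0 muln1 !mulnA.
rewrite -[X in X <= _]muln1; apply: (double_counting (R := link)) => [p p_final|[T [c r]] _].
  have [rp card_p] := final_stage_roots k0_ge2 p_final.
  have [c link_c] := exists_linkable treeT0 nstarT0 rp card_p.
  apply/card_gt0P; exists ([set c.1; c.2] |: parent_edges p, (c, (root_of p c.1, root_of p c.2))).
  by rewrite inE /link /= link_c !eqxx in_setX in_setT link_trees_avoiding.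
rewrite leqNgt; apply/negP => /card_gt1P[p [q []]]; rewrite [p \in _]inE [q \in _]inE /link /=.
move=> /andP[/(final_stage_roots k0_ge2)[rp card_p] /and3P[/andP[rc _] /eqP T_p /eqP r_p]].
move=> /andP[/(final_stage_roots k0_ge2)[rq card_q] /and3P[_ /eqP T_q /eqP r_q]].
move: r_p; rewrite r_q => -[pq1 pq2].
by rewrite (link_parent_edges_inj rp rq card_p card_q rc) ?eqxx // -T_p -T_q.
Qed.

Lemma card_final_stage_ge : rooted p0 -> parent_edges p0 = F -> #|T0| < n ->
  3 <= #|roots_of p0| ->
  n ^ (#|roots_of p0| - 3) <= #|stage (#|roots_of p0| - 2)| * (#|roots_of p0| - 2).
Proof.
move=> rooted_p0 edges_p0 card_T0 k0_ge3.
have := prod_affine_ge (#|roots_of p0| - 2) n.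
have -> : (#|roots_of p0| - 2).-1 = #|roots_of p0| - 3 by lia.
move/leq_trans/(_ (card_stage rooted_p0 edges_p0 card_T0 (leqnn _))).
have e : #|roots_of p0| - 2 = (#|roots_of p0| - 3).+1 by lia.
by rewrite {2}e factS -e mulnA leq_pmul2r ?fact_gt0.
Qed.

End Grafting.

Theorem proposition3p1 (n t : nat) :
  1 <= t -> 2 * t + 110 <= n ->
  forall (F T0 : edgeset n),
    is_forest F -> #|F| = t ->
    is_spanning_tree T0 -> ~~ is_star T0 ->
    #|T0 :&: F| < t ->
    n ^ (n - 2 * t - 17) < #|trees_avoiding T0 F|.
Proof.
move=> _ n_large F T0 forestF card_F treeT0 nstarT0 _.
have [p0 rooted_p0 edges_p0] := forest_parent_edges forestF.
have card_T0 : #|T0| < n by apply: card_forest (forest_spanning_tree treeT0) _; lia.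
have card_roots : #|roots_of p0| = n - t.
  by have := card_parent_edges rooted_p0; rewrite edges_p0 card_F; lia.
have k0_ge3 : 3 <= #|roots_of p0| by lia.
have lower := card_final_stage_ge rooted_p0 edges_p0 card_T0 k0_ge3.
have upper := card_final_stage_le F treeT0 nstarT0 (ltnW k0_ge3).
have growth : n ^ (n - t - 3) <= #|trees_avoiding T0 F| * n ^ 5.
  rewrite -card_roots expnSr mulnA; apply: leq_trans lower (leq_mul upper _); lia.
have n_gt1 : 1 < n by lia.
rewrite -(@ltn_pmul2r (n ^ 5)) ?expn_gt0 ?(ltnW n_gt1) //; apply: leq_trans growth.
by rewrite -expnD ltn_exp2l //; lia.
Qed.
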